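(* Let $H$ be a connected graph and let $v\in \mathrm{MS}(H)$. Then every loopless connected component of $H|v$ consists of a single isolated vertex.
   Context: Graphs are finite, may have loops, but no multiple edges; an edge is either $\{u\}$ (a loop at $u$) or $\{u,w\}$ with $u\ne w$. A vertex is isolated if no edge (including a loop) is incident to it. A graph is loopless if no vertex is looped. For $v\in V(H)$, $N_H(v)=\{u\in V(H): u\neq v,\ \{u,v\}\in E(H)\}$. Let $L$ be the set of looped vertices; $N^l_H(v)=N_H(v)\cap L$ and $N^{ul}_H(v)=N_H(v)\setminus L$. Define $s(v)=|N^{ul}_H(v)|-|N^l_H(v)|$, and let $\mathrm{MS}(H)$ be the set of looped vertices $v$ of $H$ such that $s(w)\le s(v)$ for all $w\in N^l_H(v)$. For a looped vertex $v$, the local complement $H*v$ is the graph on $V(H)$ such that for every $p\subseteq V(H)$ with $|p|\in\{1,2\}$: $p\in E(H*v)$ iff either ($p\notin E(H)$ and $p\subseteq N_H(v)$) or ($p\in E(H)$ and $p\not\subseteq N_H(v)$). $H*_c v$ is obtained from $H*v$ by removing all edges incident to $v$, including its loop; $H|v$ is obtained from $H*_c v$ by deleting the vertex $v$. *)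

(* A graph with loops on a finite vertex type T is a
   symmetric relation e : rel T; {u,w} (u<>w) is an edge iff e u w,
   and {u} (a loop) is an edge iff e u u. *)
From mathcomp Require Import all_boot all_order all_algebra.
Set Implicit Arguments. Unset Strict Implicit. Unset Printing Implicit Defensive.
Import GRing.Theory Num.Theory.

Section Graphs.
Variables (T : finType) (e : rel T).

Definition nbh (v : T) : {set T} := [set u | (u != v) && e u v].
Definition looped (u : T) : bool := e u u.
Definition nbh_l (v : T) : {set T} := [set u in nbh v | looped u].
Definition nbh_ul (v : T) : {set T} := [set u in nbh v | ~~ looped u].
Definition sdeg (v : T) : int := (#|nbh_ul v|%:Z - #|nbh_l v|%:Z)%R.
Definition MS : {set T} :=
  [set v | looped v && [forall w in nbh_l v, (sdeg w <= sdeg v)%R]].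

(* local complement H*v : p = {x,y} (x = y allowed, giving loops) is an edge
   iff (p notin E and p subset N(v)) or (p in E and p not subset N(v)) *)
Definition lcomp (v : T) : rel T :=
  fun x y => e x y (+) ((x \in nbh v) && (y \in nbh v)).
Definition lcomp_c (v : T) : rel T :=
  fun x y => [&& x != v, y != v & lcomp v x y].
Definition lcomp_del (v : T) : rel {x : T | x != v} :=
  fun x y => lcomp_c v (val x) (val y).

Definition graph_connected : Prop := forall x y : T, connect e x y.
End Graphs.
Arguments lcomp_del {T} e v.

From mathcomp Require Import all_boot all_order all_algebra.
From mathcomp Require Import zify.
Set Implicit Arguments. Unset Strict Implicit. Unset Printing Implicit Defensive.
Import Order.TTheory.

(* Since H is connected, the component of x in H|v reaches a neighbour z of v:
   along a walk of H towards v, edges leaving non-neighbours of v are kept.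
   If z had a neighbour y in the loopless component, then (z being looped in H)
   comparing N(v) and N(z) gives N^ul(v) ⊆ N^ul(z) and N^l(z)-v ⊆ N^l(v)-z,
   with y witnessing a strict inclusion; hence s(v) < s(z) for the looped
   neighbour z of v, contradicting v ∈ MS(H).  So z is isolated, and the
   component is {z} = {x}. *)

Lemma connect_isolated (V : finType) (r : rel V) (x y : V) :
  (forall y, ~~ r x y) -> connect r x y -> y = x.
Proof.
move=> x_iso /connectP [[|z p]] /= => [_ -> //|/andP[rxz _]].
by rewrite (negbTE (x_iso z)) in rxz.
Qed.

Section LocalComplement.
Variables (T : finType) (e : rel T).
Hypothesis e_sym : symmetric e.

Lemma lcomp_delE (v : T) (a b : {x : T | x != v}) :
  lcomp_del e v a b = lcomp e v (val a) (val b).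
Proof. by rewrite /lcomp_del /lcomp_c (valP a) (valP b). Qed.

Lemma connect_sym_lcomp_del (v : T) : connect_sym (lcomp_del e v).
Proof. by apply: sym_connect_sym => a b; rewrite !lcomp_delE /lcomp e_sym andbC. Qed.

Lemma connect_lcomp_del_nbh (v : T) (x : {x : T | x != v}) :
  connect e (val x) v ->
  exists2 z, connect (lcomp_del e v) x z & val z \in nbh e v.
Proof.
case/connectP=> p; elim: p x => [|b p IH] x /= => [_ xv|/andP[exb pb] lp].
  by move: (valP x); rewrite /= -xv eqxx.
case xN: (val x \in nbh e v); first by exists x.
have bv : b != v by apply: contraFneq xN => bv; subst b; rewrite inE (valP x).
have [z bz zN] := IH (exist _ b bv) pb lp.
exists z => //; apply: connect_trans bz; apply: connect1.
by rewrite lcomp_delE /lcomp xN /= exb.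
Qed.

Lemma sdeg_lt_nbh (u w : T) :
  u \in nbh_l e w -> w \in nbh_l e u ->
  nbh_ul e u \subset nbh_ul e w -> nbh_l e w :\ u \subset nbh_l e u :\ w ->
  (nbh_ul e u \proper nbh_ul e w) || (nbh_l e w :\ u \proper nbh_l e u :\ w) ->
  (sdeg e u < sdeg e w)%R.
Proof.
move=> uw wu /subset_leq_card s_ul /subset_leq_card s_l /orP proper_ul_l.
rewrite /sdeg (cardsD1 u (nbh_l e w)) (cardsD1 w (nbh_l e u)) uw wu.
case: proper_ul_l => /proper_card; lia.
Qed.

Section IsolatedNeighbour.
Variables (v z : T).
Hypotheses (zN : z \in nbh e v) (z_unlooped : ~~ lcomp e v z z)
  (nbh_unlooped : forall y, y != v -> lcomp e v z y -> ~~ lcomp e v y y).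

Let zv : z != v. Proof. by move: zN; rewrite inE => /andP[]. Qed.
Let ezv : e z v. Proof. by move: zN; rewrite inE => /andP[]. Qed.

Lemma looped_nbh : looped e z.
Proof. by move: z_unlooped; rewrite /lcomp zN addbT negbK. Qed.

Lemma nbh_ul_subset : nbh_ul e v \subset nbh_ul e z.
Proof.
apply/subsetP=> y; rewrite !inE /looped => /andP[/andP[yv eyv] nly].
have yz : y != z by apply: contraNneq nly => ->; apply: looped_nbh.
rewrite yz nly andbT /=; have := contraL (nbh_unlooped yv).
by rewrite /lcomp !inE yv eyv zv ezv /= !addbT negbK e_sym; apply.
Qed.

Lemma nbh_l_subset : nbh_l e z :\ v \subset nbh_l e v :\ z.
Proof.
apply/subsetP=> y; rewrite !inE /looped => /andP[yv /andP[/andP[yz eyz] ly]].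
rewrite yz yv ly andbT /=; apply/negPn/negP => nyv; move: (nbh_unlooped yv).
by rewrite /lcomp !inE yv (negbTE nyv) !andbF !addbF e_sym eyz ly => /(_ isT).
Qed.

Lemma nbh_proper_of_lcomp (y : T) : y != v -> lcomp e v z y ->
  (nbh_ul e v \proper nbh_ul e z) || (nbh_l e z :\ v \proper nbh_l e v :\ z).
Proof.
move=> yv zy; have yy := nbh_unlooped yv zy.
have yz : y != z by apply: contraNneq z_unlooped => yz; subst y.
move: zy yy; rewrite /lcomp zN /=; case yN: (y \in nbh e v) => /= zy yy.
  move: zy yy; rewrite !addbT negbK => nezy ly.
  apply/orP; right; apply/properP; split; first exact: nbh_l_subset.
  exists y; first by rewrite in_setD1 yz inE yN.
  by rewrite in_setD1 inE negb_and inE e_sym (negbTE nezy) andbF orbT.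
move: zy yy; rewrite !addbF => ezy nly.
apply/orP; left; apply/properP; split; first exact: nbh_ul_subset.
exists y; first by rewrite !inE yz e_sym ezy.
by rewrite inE yN.
Qed.

Lemma lcomp_nbh_isolated : v \in MS e -> forall y, y != v -> ~~ lcomp e v z y.
Proof.
rewrite inE => /andP[lv /forall_inP sdeg_max] y yv; apply/negP => zy.
have zl : z \in nbh_l e v by rewrite inE zN looped_nbh.
have vl : v \in nbh_l e z by rewrite !inE eq_sym zv e_sym ezv lv.
have := sdeg_lt_nbh vl zl nbh_ul_subset nbh_l_subset (nbh_proper_of_lcomp yv zy).
by rewrite ltNge sdeg_max.
Qed.

End IsolatedNeighbour.
End LocalComplement.

Theorem mainTheorem5 (T : finType) (e : rel T) (He : symmetric e)
    (Hconn : graph_connected e) (v : T) (Hv : v \in MS e) :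
  forall x : {x : T | x != v},
    (forall y, connect (lcomp_del e v) x y -> ~~ lcomp_del e v y y) ->
    (forall y, connect (lcomp_del e v) x y -> y = x) /\
    (forall y, ~~ lcomp_del e v x y).
Proof.
move=> x comp_unlooped.
have [z xz zN] := connect_lcomp_del_nbh (Hconn (val x) v).
have z_iso : forall y, ~~ lcomp_del e v z y.
  move=> y; rewrite lcomp_delE; apply: (lcomp_nbh_isolated He zN _ _ Hv (valP y)).
    by rewrite -lcomp_delE; apply: comp_unlooped.
  move=> y' y'v zy'; have := comp_unlooped (exist _ y' y'v).
  rewrite !lcomp_delE; apply; apply: connect_trans xz (connect1 _).
  by rewrite lcomp_delE.
have zx : x = z.
  by apply: connect_isolated z_iso _; rewrite connect_sym_lcomp_del.
by subst z; split=> // y; apply: connect_isolated.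
Qed.
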